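(* For all integers $L\ge 0$, $p\ge 0$ and $n\ge p$, $$b_L(p,n+1)=\sum_{k=0}^{n-p}\binom{n}{k}\binom{n+1}{k}^{L}b_L(p,k),$$ with $b_L(p,0)=1$, $b_L(p,1)=\cdots=b_L(p,p)=0$ and $b_L(p,p+1)=1$. Consequently all $b_L(p,n)$ are nonnegative integers.
   Context: For an integer $L\ge 0$ let ${}_0F_L(z)=\sum_{n=0}^{\infty}\frac{z^n}{(n!)^{L+1}}$. For an integer $p\ge0$ define the numbers $b_L(p,n)$, $n\ge0$, by the formal power series identity $\exp\Big({}_0F_L(z)-\sum_{k=0}^{p}\frac{z^k}{(k!)^{L+1}}\Big)=\sum_{n=0}^{\infty}b_L(p,n)\frac{z^n}{(n!)^{L+1}}$. *)

(* Formal power series over rat, handled via truncations. *)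
From mathcomp Require Import all_boot all_order all_algebra.
Set Implicit Arguments. Unset Strict Implicit. Unset Printing Implicit Defensive.
Import Order.TTheory GRing.Theory Num.Theory.
Local Open Scope ring_scope.

(* Coefficient of z^i in  0F_L(z) - sum_{k=0}^p z^k/(k!)^(L+1):
   1/(i!)^(L+1) if i > p, and 0 otherwise. *)
Definition fcoef (L p i : nat) : rat :=
  if (p < i)%N then ((i`! ^ L.+1)%N)%:R^-1 else 0.

Definition fpoly (L p N : nat) : {poly rat} := \poly_(i < N.+1) fcoef L p i.

(* Coefficient of z^n in exp(f) = sum_m f^m/m!.  Since f has zero constant
   term, only m <= n and the truncation of f to degree n contribute. *)
Definition expcoef (L p n : nat) : rat :=
  (\sum_(m < n.+1) (m`!)%:R^-1 *: (fpoly L p n) ^+ m)`_n.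

Definition bL (L p n : nat) : rat := ((n`! ^ L.+1)%N)%:R * expcoef L p n.

(* Write f for the series in the exponent and E = exp f.  As f has no constant
   term, the coefficient of z^k in sum_(m < M) f^m/m! is the same for all M > k and
   only involves the terms of f of degree <= k; hence E' = f' E can be read off
   coefficientwise: (n+1) e_(n+1) = sum_k (n+1-k) f_(n+1-k) e_k.  Multiplying by
   ((n+1)!)^(L+1) and using f_i = 1/(i!)^(L+1) for i > p (and 0 otherwise) turns
   the weights into C(n,k) C(n+1,k)^L; integrality follows by strong induction. *)
From mathcomp Require Import all_boot all_order all_algebra.
From mathcomp Require Import ring zify.
Set Implicit Arguments. Unset Strict Implicit. Unset Printing Implicit Defensive.
Import Order.TTheory GRing.Theory Num.Theory.
Local Open Scope ring_scope.

Section PolyPowerCoef.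
Variable R : comNzRingType.
Implicit Types g : {poly R}.

Lemma coef_expr_take_poly g n m k :
  (k < n)%N -> (g ^+ m)`_k = (take_poly n g ^+ m)`_k.
Proof.
move=> kn; apply/eqP; rewrite -subr_eq0 -coefB subrXX.
rewrite -{1}(poly_take_drop n g) addrAC subrr add0r mulrAC coefMXn kn //.
Qed.

Lemma coef_expr_eq0 g m k : g`_0 = 0 -> (k < m)%N -> (g ^+ m)`_k = 0.
Proof.
move=> g0 km.
have take1 : take_poly 1 g = 0.
  by apply/polyP => -[|i]; rewrite coef_take_poly coef0.
by rewrite -(poly_take_drop 1 g) take1 add0r exprMn -exprM mul1n coefMXn km.
Qed.

End PolyPowerCoef.

Section TruncatedExp.
Variable F : numFieldType.
Implicit Types g : {poly F}.

Definition exp_trunc g M : {poly F} := \sum_(m < M) (m`!)%:R^-1 *: g ^+ m.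

Lemma coef_exp_trunc_take g M k : g`_0 = 0 -> (k < M)%N ->
  (exp_trunc g M)`_k = (exp_trunc (take_poly k.+1 g) k.+1)`_k.
Proof.
move=> g0 kM; rewrite !coef_sum -(subnKC kM) big_split_ord /=.
rewrite [X in _ + X]big1 ?addr0 => [|m _]; last first.
  by rewrite coefZ coef_expr_eq0 ?mulr0 // ltnS leq_addr.
by apply: eq_bigr => m _; rewrite !coefZ (coef_expr_take_poly _ _ (ltnSn k)).
Qed.

Lemma deriv_exp_trunc g M : (exp_trunc g M.+1)^`() = g^`() * exp_trunc g M.
Proof.
rewrite /exp_trunc raddf_sum big_ord_recl /= derivZ deriv_exp mulr0n scaler0.
rewrite add0r mulr_sumr; apply: eq_bigr => m _ /=.
rewrite derivZ deriv_exp /= -scaler_nat scalerA factS natrM invfM mulrAC.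
by rewrite mulVf ?mul1r ?scalerAr // pnatr_eq0.
Qed.

End TruncatedExp.

Section Coefficients.
Variables L p : nat.

Lemma fpoly_coef0 N : (fpoly L p N)`_0 = 0.
Proof. by rewrite coef_poly /fcoef ltn0. Qed.

Lemma take_fpoly N k : (k <= N)%N -> take_poly k.+1 (fpoly L p N) = fpoly L p k.
Proof.
move=> kN; apply/polyP => i; rewrite coef_take_poly !coef_poly.
by case: ltnP => // ik; rewrite (leq_trans ik).
Qed.

Lemma coef_exp_trunc_fpoly N M k : (k <= N)%N -> (k < M)%N ->
  (exp_trunc (fpoly L p N) M)`_k = expcoef L p k.
Proof. by move=> kN kM; rewrite coef_exp_trunc_take ?fpoly_coef0 ?take_fpoly. Qed.

Lemma expcoef_rec n : (n.+1)%:R * expcoef L p n.+1 =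
  \sum_(0 <= k < n.+1) (fcoef L p (n - k).+1 *+ (n - k).+1) * expcoef L p k.
Proof.
rewrite [expcoef _ _ _]/expcoef -/(exp_trunc _ _) mulr_natl -coef_deriv.
rewrite deriv_exp_trunc coefMr big_mkord; apply: eq_bigr => k _.
rewrite coef_deriv coef_poly ltnS ltnS leq_subr coef_exp_trunc_fpoly //.
exact: ltnW.
Qed.

Lemma expcoef_eq0 n : (n < p)%N -> expcoef L p n.+1 = 0.
Proof.
move=> np; have /eqP := expcoef_rec n.
rewrite big1 => [|k _]; last first.
  by rewrite /fcoef ifN ?mul0rn ?mul0r // -leqNgt; lia.
by rewrite mulf_eq0 pnatr_eq0 => /eqP.
Qed.

End Coefficients.

Lemma bin_binS_fact n k L : (k <= n)%N ->
  ('C(n, k) * 'C(n.+1, k) ^ L * k`! ^ L.+1 * (n.+1 - k)`! ^ L.+1 =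
   n`! * (n.+1)`! ^ L * (n.+1 - k))%N.
Proof.
move=> kn; rewrite -(bin_fact (leqW kn)) -{1}(bin_fact kn) !subSn // factS.
by rewrite !expnMn !expnS; ring.
Qed.

Section Recursion.
Variables L p : nat.

Lemma bL0 : bL L p 0 = 1.
Proof.
by rewrite /bL /expcoef big_ord1 /= fact0 exp1n invr1 scale1r expr0 coef1 mul1r.
Qed.

Lemma bL_eq0 k : (1 <= k <= p)%N -> bL L p k = 0.
Proof. by case: k => // k kp; rewrite /bL expcoef_eq0 ?mulr0. Qed.

Lemma bL_rec n : (p <= n)%N -> bL L p n.+1 =
  \sum_(0 <= k < (n - p).+1) (('C(n, k) * 'C(n.+1, k) ^ L)%N)%:R * bL L p k.
Proof.
move=> pn; set c := (n`! * (n.+1)`! ^ L)%N.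
have factSX : ((n.+1)`! ^ L.+1)%N = (c * n.+1)%N by rewrite /c expnS factS; ring.
rewrite /bL factSX natrM -mulrA expcoef_rec mulr_sumr.
rewrite (big_cat_nat _ (n := (n - p).+1)) //= ?ltnS ?leq_subr //.
rewrite [X in _ + X]big_nat_cond [X in _ + X]big1 ?addr0 => [|k]; last first.
  by case/andP=> /andP[kp kn] _; rewrite /fcoef ifN ?mul0rn ?mul0r ?mulr0 //; lia.
apply: eq_big_nat => k /andP[_ kp]; rewrite ltnS in kp.
have kn : (k <= n)%N by lia.
rewrite /fcoef ifT; last by lia.
rewrite !mulrA; congr (_ * _).
rewrite -(mulr_natr _ (n - k).+1) mulrCA -2!natrM /c -subSn // -bin_binS_fact //.
by rewrite natrM mulrC mulfK // pnatr_eq0 -lt0n expn_gt0 fact_gt0.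
Qed.

Lemma bL_nat n : bL L p n \is a Num.nat.
Proof.
elim/ltn_ind: n => -[|n] IH; first by rewrite bL0.
have [np|pn] := ltnP n p; first by rewrite bL_eq0.
rewrite bL_rec // big_nat_cond; apply: rpred_sum => k /andP[/andP[_ kn] _].
by rewrite rpredM ?natr_nat ?IH // (leq_trans kn) // ltnS leq_subr.
Qed.

End Recursion.

Theorem mainTheorem7 (L p : nat) :
  (forall n : nat, (p <= n)%N ->
     bL L p n.+1 =
       \sum_(0 <= k < (n - p).+1) (('C(n, k) * 'C(n.+1, k) ^ L)%N)%:R * bL L p k)
  /\ bL L p 0 = 1
  /\ (forall k : nat, (1 <= k <= p)%N -> bL L p k = 0)
  /\ bL L p p.+1 = 1
  /\ (forall n : nat, exists m : nat, bL L p n = m%:R).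
Proof.
split; first exact: bL_rec.
split; first exact: bL0.
split; first exact: bL_eq0.
split; first by rewrite bL_rec // subnn big_nat1 bin0 exp1n bL0 mulr1.
by move=> n; apply/natrP/bL_nat.
Qed.
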